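(* Let $\Gamma_M$ be a perfect matching graph representing a planar trivalent graph $G$ with perfect matching $M$, and let $\widetilde\Gamma_M$ be obtained from $\Gamma_M$ by a flip move (with the same ordering of matching edges). Then the hypercube of states of $\Gamma_M$ contains a bad face if and only if the hypercube of states of $\widetilde\Gamma_M$ contains a bad face.
   Context: A perfect matching graph $\Gamma_M$ is an embedding in $S^2$ of a planar trivalent graph $G$ together with a perfect matching $M$; fix an ordering $M_1,\dots,M_n$ of the edges of $M$. Resolution configurations: $D=(Z(D),A(D))$ with $Z(D)$ a finite set of circles immersed in $S^2$ (union has only transverse double points) and $A(D)$ a finite totally ordered set of disjoint embedded arcs meeting the circles exactly in their endpoints. Surgery $s_A(D)$ along $A$: in a small disk around $A$ meeting the circles in segments $\alpha$ (ends $z,w$) and $\beta$ (ends $x,y$), $z,x$ on one side of $A$ and $w,y$ on the other, replace $\alpha\cup\beta$ by strands $z$–$y$ and $x$–$w$ crossing once transversally; arcs become $A(D)\setminus\{A\}$. An arc is an $\eta$-, $\Delta$-, or $m$-arc according as surgery along it changes the number of circles by $0,+1,-1$. Resolutions: for a matching edge $e=uv$, let $a,b$ be the other edges at $u$ and $c,d$ those at $v$, with $a,c$ on the same side of $e$. The $0$-resolution removes $u,v,e$, joins $a$–$c$ and $b$–$d$ by disjoint strands parallel to $e$, and places an arc joining these two strands; the $1$-resolution joins $a$–$d$ and $b$–$c$ by strands crossing once, with no arc. For $v\in\{0,1\}^n$, $D_{\Gamma_M}(v)$ takes the $v_i$-resolution at $M_i$; its arcs $A_i$ (for $v_i=0$)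 are ordered by $i$. Bad face: states $v,u\in\{0,1\}^n$ differing exactly in two coordinates $i\neq j$ with $v_i=v_j=0$, $u_i=u_j=1$, such that (for some ordering of $\{i,j\}$) $A_i$ is an $\eta$-arc of $D_{\Gamma_M}(v)$, $A_j$ is an $\eta$-arc of $s_{A_i}(D_{\Gamma_M}(v))$, $A_j$ is a $\Delta$-arc of $D_{\Gamma_M}(v)$, and $A_i$ is an $m$-arc of $s_{A_j}(D_{\Gamma_M}(v))$ (a face where $m\circ\Delta=\eta\circ\eta$). Flip move: choose a closed disk $B\subset S^2$ whose boundary avoids vertices and meets $\Gamma_M$ transversally in $k\in\{0,1,2\}$ points in interiors of edges; replace $\Gamma_M\cap B$ by its image under a reflection of $B$ fixing those $k$ points ($k$-flip). *)

(* Perfect matching graphs are encoded as combinatorial maps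
   (rotation systems) on S^2. *)
From mathcomp Require Import all_boot all_fingroup.
Set Implicit Arguments. Unset Strict Implicit. Unset Printing Implicit Defensive.

Section PMG.
Variables (D : finType) (alpha sigma : {perm D}) (n : nat) (ord : 'I_n -> D).

(* darts = half-edges; alpha = edge involution; sigma = rotation at vertices
   (vertices = sigma-orbits); the i-th matching edge M_i = {ord i, alpha (ord i)}. *)

Definition mdart (d : D) : bool := [exists i, (d == ord i) || (d == alpha (ord i))].

Definition glink : rel D :=
  fun x y => [|| y == alpha x, y == sigma x, x == alpha y | x == sigma y].
Definition ncomp : nat := n_comp glink [pred _ | true].

(* genus 0 (Euler formula V - E + F = 2c for a combinatorial map) *)
Definition planar_map : Prop :=
  #|porbits sigma| + #|porbits (sigma * alpha)%g| = #|porbits alpha| + 2 * ncomp.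

Definition is_pmg : Prop :=
  [/\ forall d, alpha (alpha d) = d /\ alpha d != d,
      forall d, [/\ sigma d != d, sigma (sigma d) != d & sigma (sigma (sigma d)) = d],
      planar_map,
      forall i j : 'I_n, i != j -> ord j != ord i /\ ord j != alpha (ord i)
    & forall d, #|[set d' in porbit sigma d | mdart d']| = 1].

(* resolution data: r i = true means the 1-resolution (crossing strands) is
   taken at M_i, r i = false the 0-resolution (parallel strands). *)
Definition sbit (r : {ffun 'I_n -> bool}) (m : D) : bool :=
  [exists i, r i && ((m == ord i) || (m == alpha (ord i)))].

Definition matd (d : D) : D := if mdart (sigma d) then sigma d else (sigma^-1)%g d.

(* the non-matching dart joined to d by the strand through the matching edge at d *)
Definition partner (r : {ffun 'I_n -> bool}) (d : D) : D :=
  let m := matd d in let m' := alpha m in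
  if (d == sigma m) != sbit r m then sigma (sigma m') else sigma m'.

(* resolution configuration: local resolution data and the set of arcs *)
Definition rconf := ({ffun 'I_n -> bool} * {set 'I_n})%type.

Definition state_conf (v : {ffun 'I_n -> bool}) : rconf := (v, [set i | ~~ v i]).

(* surgery along the arc A_i: parallel strands replaced by crossing strands *)
Definition surgery (c : rconf) (i : 'I_n) : rconf :=
  ([ffun k => if k == i then true else c.1 k], c.2 :\ i).

Definition clink (r : {ffun 'I_n -> bool}) : rel D :=
  fun x y => (y == alpha x) || (y == partner r x).

Definition circles (c : rconf) : nat := n_comp (clink c.1) [pred d | ~~ mdart d].

Definition eta_arc (c : rconf) i := (i \in c.2) && (circles (surgery c i) == circles c).
Definition delta_arc (c : rconf) i := (i \in c.2) && (circles (surgery c i) == (circles c).+1).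
Definition m_arc (c : rconf) i := (i \in c.2) && ((circles (surgery c i)).+1 == circles c).

Definition has_bad_face : Prop :=
  exists (v u : {ffun 'I_n -> bool}) (i j : 'I_n),
    [/\ i != j, v i = false /\ v j = false, u i = true /\ u j = true
      & forall k, k != i -> k != j -> u k = v k] /\
    [/\ eta_arc (state_conf v) i, eta_arc (surgery (state_conf v) i) j,
        delta_arc (state_conf v) j & m_arc (surgery (state_conf v) j) i].

End PMG.

(* flip move on the vertex set S (a sigma-closed set of darts) of the part of
   the graph inside the disk: rotations inside are reversed; at most 2 edges
   cross between inside and outside. *)
Definition is_flip (D : finType) (alpha sigma sigma' : {perm D}) (S : {set D}) : Prop :=
  [/\ forall d, (sigma d \in S) = (d \in S),
      #|[set d in S | alpha d \notin S]| <= 2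
    & forall d, sigma' d = if d \in S then (sigma^-1)%g d else sigma d].

From Pilot Require Import Defs.
From mathcomp Require Import all_boot all_fingroup.
Set Implicit Arguments. Unset Strict Implicit. Unset Printing Implicit Defensive.

(* The flip only changes the rotation inside the disk, so in any resolution
   the strands inside and outside the disk are unchanged; only the strands
   through matching edges that cross the boundary are reconnected, and the
   flip exchanges the two strand ends at the inner end of each such edge.
   At most two edges cross, and by a parity count a crossing matching edge
   cannot come with a crossing non-matching edge.  Cut the crossing strands:
   every piece has two ends, so the pieces pair up the (two or four) inner
   ends and, separately, the outer ends.  With one crossing edge the two inner
   ends are joined inside and the exchange does not change the circles; with
   two, a case analysis on the pairings shows that the number of circles
   through the cut is the same before and after the exchange.  So every
   resolution has the same number of circles, every arc has the same type,
   and the bad faces are the same. *)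

Lemma even_card_involution (T : finType) (A : {set T}) (f : T -> T) :
  (forall x, x \in A -> [/\ f x \in A, f (f x) = x & f x != x]) -> ~~ odd #|A|.
Proof.
move: {2}#|A| (leqnn #|A|) => k; elim: k A => [|k IH] A.
  by rewrite leqn0 => /eqP ->.
move=> leA fA; case: (set_0Vmem A) => [-> | [x xA]]; first by rewrite cards0.
have [fxA ffx fxx] := fA x xA.
have cardA : #|A| = #|A :\ x :\ f x|.+2.
  by rewrite (cardsD1 x A) xA (cardsD1 (f x) (A :\ x)) !inE fxx fxA.
rewrite cardA /= negbK; apply: IH => [|y]; first by move: leA; rewrite cardA => /ltnW.
rewrite !inE => /and3P[yfx yx yA]; have [fyA ffy fyy] := fA y yA.
split=> //; rewrite fyA andbT; apply/andP; split.
  by apply: contra yx => /eqP e; rewrite -ffy e ffx.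
by apply: contra yfx => /eqP e; rewrite -ffy e.
Qed.

Lemma card_le2_set2 (T : finType) (X : {set T}) m d :
  #|X| <= 2 -> m \in X -> d \in X -> m != d -> X = [set m; d].
Proof.
move=> X2 mX dX md; apply/eqP; rewrite eq_sym eqEcard cards2 md X2 andbT.
by apply/subsetP => y /set2P[] ->.
Qed.

Section Connect.
Variables (T : finType) (e : rel T).

Lemma connect_preserved (K : pred T) x y :
  (forall u v, K u -> e u v -> K v) -> K x -> connect e x y -> K y.
Proof.
move=> eK Kx /connectP[pth epth ->]; elim: pth x Kx epth => //= z pth IH x Kx.
by case/andP=> exz; apply: IH; apply: eK exz.
Qed.

Lemma connect_sym_of_swap : (forall x y, e x y -> e y x) -> connect_sym e.
Proof. by move=> esym; apply: sym_connect_sym => x y; apply/idP/idP; apply: esym. Qed.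

Lemma closure2E x1 x2 t :
  (t \in closure e (pred2 x1 x2)) = connect e t x1 || connect e t x2.
Proof.
apply/pred0Pn/orP => [[z /andP[/= ctz /pred2P[] <-]] | [] ctx]; [left | right | |] => //.
  by exists x1; rewrite !inE /= ctx eqxx.
by exists x2; rewrite !inE /= ctx eqxx orbT.
Qed.

Lemma n_comp_predI (A : {pred T}) (P : pred T) :
  n_comp e A = n_comp e [predI A & P] + n_comp e [predI A & [predC P]].
Proof.
rewrite /n_comp_mem -(cardID P); congr (_ + _); apply: eq_card => t;
  by rewrite !inE /=; case: (roots e t); case: (t \in A); case: (t \in P).
Qed.

Lemma n_comp_restrict (e' : rel T) (A : {pred T}) :
  (forall x y, x \in A -> e x y = e' x y) -> (forall x y, x \in A -> e x y -> y \in A) ->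
  n_comp e A = n_comp e' A.
Proof.
move=> ee' eA; have cA x : x \in A -> connect e x =1 connect e' x.
  move=> xA y; apply/idP/idP => /connectP[pth epth ->]; apply/connectP; exists pth => //;
    elim: pth x xA epth => //= z pth IH x xA /andP[exz pz].
    by rewrite -ee' // exz IH // (eA x z).
  by rewrite ee' // exz IH // (eA x z) // ee'.
apply: eq_card => x; rewrite !inE; case: (boolP (x \in A)) => xA; rewrite ?andbF //.
by rewrite /roots /root (eq_pick (cA x xA)).
Qed.

Hypothesis e_sym : connect_sym e.
Local Notation c := (connect e).

Lemma connect_square x1 y1 x2 y2 :
  c x1 y1 -> c x2 y2 -> c x1 x2 || c y1 y2 ->
  {in [:: x1; x2; y1; y2] &, forall u v, c u v}.
Proof.
move=> c11 c22 c12.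
have c1x2 : c x1 x2.
  case/orP: c12 => // cy; apply: connect_trans c11 (connect_trans cy _).
  by rewrite e_sym.
have c1 u : u \in [:: x1; x2; y1; y2] -> c x1 u.
  by rewrite !inE => /or4P[] /eqP->; rewrite ?connect0 //; apply: connect_trans c22.
by move=> u v /c1 cu /c1 cv; apply: connect_trans cv; rewrite e_sym.
Qed.

Section FourPoints.
Variables w1 w2 w3 w4 : T.
Local Notation ws := [:: w1; w2; w3; w4].

Lemma even_count4_pair : ~~ odd (count (c w3) ws) -> c w1 w2 -> c w3 w4.
Proof.
move=> ev c12; have c32 : c w3 w2 = c w3 w1.
  by apply/idP/idP => h; apply: connect_trans h _; rewrite // e_sym.
by move: ev; rewrite /= c32 connect0; case: (c w3 w1); case: (c w3 w4).
Qed.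

Lemma even_count4_split : ~~ odd (count (c w1) ws) -> ~~ odd (count (c w2) ws) ->
  ~~ c w1 w2 -> (c w1 w3 && c w2 w4) || (c w1 w4 && c w2 w3).
Proof.
move=> ev1 ev2 n12.
have n21 : c w2 w1 = false by rewrite e_sym; apply/negbTE.
have excl u : c w1 u -> c w2 u = false.
  by move=> c1u; apply/negbTE; apply: contra n12 => c2u; apply: connect_trans c1u _; rewrite e_sym.
move: ev1 ev2 (@excl w3) (@excl w4); rewrite /= !connect0 (negbTE n12) n21.
by case: (c w1 w3); case: (c w1 w4); case: (c w2 w3); case: (c w2 w4) => // _ _;
  [move/(_ isT) | move=> _ /(_ isT)].
Qed.

End FourPoints.
End Connect.

(* N: strand ends; a: the other end of the same edge; p: the other end of
   the same strand; b: the inner ends of the strands leaving In.  Gluing the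
   strands by f gives [circle_rel f]; [cut_rel] cuts the strands at b. *)
Section CutCircles.
Variables (T : finType) (N In : {pred T}) (a p : T -> T) (b : seq T).
Local Notation ends := (b ++ map p b).

Hypothesis a_inv : forall x, x \in N ->
  [/\ a x \in N, a (a x) = x, a x != x & (a x \in In) = (x \in In)].
Hypothesis p_inv : forall x, x \in N -> [/\ p x \in N, p (p x) = x & p x != x].
Hypothesis b_ends : forall w, w \in b -> [/\ w \in N, w \in In & p w \notin In].
Hypothesis b_uniq : uniq b.
Hypothesis p_side : forall x, x \in N -> x \notin ends -> (p x \in In) = (x \in In).

Definition circle_rel (f : T -> T) : rel T :=
  [rel x y | (x \in N) && ((y == a x) || (y == f x))].

Definition cut_rel : rel T :=
  [rel x y | (x \in N) && ((y == a x) || (x \notin ends) && (y == p x))].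

Definition meets_cut t := has (connect cut_rel t) ends.

Definition agrees_off_ends (f : T -> T) := forall x, x \in N -> x \notin ends -> f x = p x.

Definition reglues_ends (f : T -> T) :=
  forall u, u \in ends -> [/\ f u \in ends, f (f u) = u & (f u \in In) = (u \notin In)].

Lemma mem_endsP u :
  reflect (u \in b \/ exists2 w, w \in b & u = p w) (u \in ends).
Proof. by rewrite mem_cat; apply: (iffP orP) => -[|/mapP]; auto. Qed.

Lemma ends_N u : u \in ends -> u \in N.
Proof. by case/mem_endsP => [/b_ends[] | [w /b_ends[/p_inv[pN _ _] _ _] ->]]. Qed.

Lemma ends_p u : u \in ends ->
  [/\ p u \in ends, p (p u) = u & (p u \in In) = (u \notin In)].
Proof.
case/mem_endsP => [ub | [w wb ->]].
  have [uN uIn puIn] := b_ends ub; have [_ ppu _] := p_inv uN.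
  by rewrite mem_cat map_f ?orbT // ppu uIn (negbTE puIn).
have [wN wIn pwIn] := b_ends wb; have [_ ppw _] := p_inv wN.
by rewrite ppw mem_cat wb wIn (negbTE pwIn).
Qed.

Lemma p_ends x : x \in N -> (p x \in ends) = (x \in ends).
Proof.
move=> xN; apply/idP/idP => [/ends_p[] | /ends_p[]//].
by have [_ -> _] := p_inv xN.
Qed.

Lemma ends_In u : u \in ends -> (u \in In) = (u \in b).
Proof.
case/mem_endsP => [ub | [w wb ->]]; first by rewrite ub; case: (b_ends ub).
have [_ _ pwIn] := b_ends wb; rewrite (negbTE pwIn); apply/esym/negP => pwb.
by have [_ pwIn' _] := b_ends pwb; rewrite pwIn' in pwIn.
Qed.

Lemma uniq_ends : uniq ends.
Proof.
rewrite cat_uniq b_uniq map_inj_in_uniq ?b_uniq ?andbT; last first.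
  move=> u v /b_ends[/p_inv[_ ppu _] _ _] /b_ends[/p_inv[_ ppv _] _ _] puv.
  by rewrite -ppu puv ppv.
apply/hasPn => _ /mapP[w wb ->]; apply/negP => pwb.
by have [_ _ /negP] := b_ends wb; have [_ ->] := b_ends pwb.
Qed.

Lemma cut_rel_sym : connect_sym cut_rel.
Proof.
apply: connect_sym_of_swap => x y /andP[xN /orP[/eqP-> | /andP[xe /eqP->]]].
  by have [aN aa _ _] := a_inv xN; rewrite /cut_rel /= aN aa eqxx.
by have [pN pp _] := p_inv xN; rewrite /cut_rel /= pN pp p_ends // xe eqxx orbT.
Qed.

Lemma cut_rel_In x y : cut_rel x y -> (y \in In) = (x \in In).
Proof.
case/andP=> xN /orP[/eqP-> | /andP[xe /eqP->]]; first by case: (a_inv xN).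
exact: p_side.
Qed.

Lemma connect_cut_In x y : connect cut_rel x y -> (y \in In) = (x \in In).
Proof.
move=> cxy; apply/eqP; apply: (connect_preserved (K := fun u => (u \in In) == (x \in In))) cxy => //.
by move=> u v /eqP <- /cut_rel_In ->.
Qed.

Lemma connect_cut_N x y : x \in N -> connect cut_rel x y -> y \in N.
Proof.
move=> xN; apply: connect_preserved xN => u v _ /andP[uN /orP[/eqP-> | /andP[_ /eqP->]]].
  by case: (a_inv uN).
by case: (p_inv uN).
Qed.

(* The cut component of x is paired up by a, and its part off the ends by p. *)
Lemma even_count_cut x : x \in N -> ~~ odd (count (connect cut_rel x) ends).
Proof.
move=> xN; pose C := [set y | connect cut_rel x y].
have CN y : y \in C -> y \in N by rewrite inE; apply: connect_cut_N.
have evenC : ~~ odd #|C|.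
  apply: (@even_card_involution _ C a) => y yC; have yN := CN y yC.
  have [aN aa ay _] := a_inv yN; split=> //; move: yC; rewrite !inE => cxy.
  by apply: connect_trans cxy (connect1 _); rewrite /cut_rel /= yN eqxx.
have evenCe : ~~ odd #|C :\: [set y | y \in ends]|.
  apply: (@even_card_involution _ _ p) => y; rewrite !inE => /andP[ye cxy].
  have yN : y \in N by apply: CN; rewrite inE.
  have [pN pp py] := p_inv yN; rewrite p_ends // ye; split=> //.
  by apply: connect_trans cxy _; apply: connect1; rewrite /cut_rel /= yN ye eqxx orbT.
have -> : count (connect cut_rel x) ends = #|C :&: [set y | y \in ends]|.
  rewrite -size_filter -(card_uniqP (filter_uniq _ uniq_ends)).
  by apply: eq_card => y; rewrite !inE mem_filter andbC.
move: evenC; rewrite -(cardsID [set y | y \in ends] C) oddD.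
by move: evenCe; case: (odd _); case: (odd _).
Qed.

Lemma count_cut_side x s : {in s, forall u, (u \in In) != (x \in In)} ->
  count (connect cut_rel x) s = 0.
Proof.
move=> side; rewrite (@eq_in_count _ _ pred0) ?count_pred0 // => u /side.
by apply: contraNF => /connect_cut_In ->.
Qed.

Lemma even_count_cut_in x : x \in N -> x \in In -> ~~ odd (count (connect cut_rel x) b).
Proof.
move=> xN xIn; have := even_count_cut xN.
rewrite count_cat (@count_cut_side _ (map p b)) ?addn0 //.
by move=> _ /mapP[w /b_ends[_ _ pwIn] ->]; rewrite xIn (negbTE pwIn).
Qed.

Lemma even_count_cut_out x : x \in N -> x \notin In ->
  ~~ odd (count (connect cut_rel x) (map p b)).
Proof.
move=> xN xIn; have := even_count_cut xN; rewrite count_cat (@count_cut_side _ b) //.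
by move=> w /b_ends[_ wIn _]; rewrite wIn (negbTE xIn).
Qed.

Section Regluing.
Variable f : T -> T.
Hypotheses (f_cut : agrees_off_ends f) (f_ends : reglues_ends f).

Lemma f_inv x : x \in N -> f x \in N /\ f (f x) = x.
Proof.
move=> xN; case xe: (x \in ends).
  by have [fe ffx _] := f_ends xe; rewrite (ends_N fe).
have [pN ppx _] := p_inv xN.
by rewrite !f_cut ?pN ?p_ends ?xe.
Qed.

Lemma circle_rel_sym : connect_sym (circle_rel f).
Proof.
apply: connect_sym_of_swap => x y /andP[xN /orP[/eqP-> | /eqP->]].
  by have [aN aa _ _] := a_inv xN; rewrite /circle_rel /= aN aa eqxx.
by have [fN ffx] := f_inv xN; rewrite /circle_rel /= fN ffx eqxx orbT.
Qed.

Lemma connect_cut_circle x y : connect cut_rel x y -> connect (circle_rel f) x y.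
Proof.
apply: connect_sub => {}x {}y /andP[xN /orP[axy | /andP[xe pxy]]]; apply: connect1.
  by rewrite /circle_rel /= xN axy.
by rewrite /circle_rel /= xN f_cut // pxy orbT.
Qed.

Lemma circle_rel_cut x y :
  circle_rel f x y -> cut_rel x y || (x \in ends) && (y == f x).
Proof.
case/andP=> xN /orP[axy | fxy]; first by rewrite /cut_rel /= xN axy.
by case xe: (x \in ends); rewrite /cut_rel /= ?fxy ?orbT // xN -f_cut ?xe ?fxy ?orbT.
Qed.

Lemma connect_circle_cut t : ~~ meets_cut t ->
  connect (circle_rel f) t =1 connect cut_rel t.
Proof.
move=> nt y; apply/idP/idP; last exact: connect_cut_circle.
apply: connect_preserved => // u v ctu /circle_rel_cut/orP[cuv | /andP[ue _]].
  exact: connect_trans ctu (connect1 cuv).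
by case/hasP: nt; exists u.
Qed.

Lemma connect_circle_step x : x \in N -> connect (circle_rel f) x (f x).
Proof. by move=> xN; apply: connect1; rewrite /circle_rel /= xN eqxx orbT. Qed.

Lemma connect_circle_notN t y : t \notin N -> connect (circle_rel f) t y -> y = t.
Proof.
move=> tN cty; apply/eqP; apply: (connect_preserved (K := pred1 t)) cty => //= u v /eqP-> /andP[tN'].
by rewrite tN' in tN.
Qed.

Section TwoEnds.
Variables x1 x2 : T.
Hypotheses (x1b : x1 \in b) (x2b : x2 \in b).
Hypothesis b_x12 : {in b, forall w, connect cut_rel w x1 || connect cut_rel w x2}.

Lemma ends_circle_x12 u : u \in ends ->
  connect (circle_rel f) u x1 || connect (circle_rel f) u x2.
Proof.
have b_circle w : w \in b -> connect (circle_rel f) w x1 || connect (circle_rel f) w x2.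
  by case/b_x12/orP => /connect_cut_circle ->; rewrite ?orbT.
move=> ue; case ub: (u \in b); first exact: b_circle.
have [fe _ fIn] := f_ends ue; rewrite ends_In // ub in fIn.
have fb : f u \in b by rewrite -ends_In // fIn.
have uf := connect_circle_step (ends_N ue).
by case/orP: (b_circle _ fb) => /(connect_trans uf) ->; rewrite ?orbT.
Qed.

Lemma closure_circle_x12 :
  closure (circle_rel f) (pred2 x1 x2) =i [predI N & meets_cut].
Proof.
have [[x1N _ _] [x2N _ _]] := (b_ends x1b, b_ends x2b).
have x1e : x1 \in ends by rewrite mem_cat x1b.
move=> t; rewrite closure2E !inE; apply/idP/andP => [ctx | [tN /hasP[u ue ctu]]].
  have tN : t \in N.
    apply: contraT => tN.
    by case/orP: ctx => /(connect_circle_notN tN) xt; move: tN; rewrite -xt ?x1N ?x2N.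
  split=> //; apply: contraT => nt; move: ctx; rewrite !connect_circle_cut //.
  have x2e : x2 \in ends by rewrite mem_cat x2b.
  by move: nt; rewrite unfold_in => /hasPn nt /orP[] ctx;
    [move: (nt _ x1e) | move: (nt _ x2e)]; rewrite ctx.
have := ends_circle_x12 ue.
by case/orP => /(connect_trans (connect_cut_circle ctu)) ->; rewrite ?orbT.
Qed.

Lemma n_comp_circle_x12 : n_comp (circle_rel f) N =
  (~~ connect (circle_rel f) x1 x2).+1 + n_comp cut_rel [predI N & [predC meets_cut]].
Proof.
rewrite (n_comp_predI _ _ meets_cut) -(eq_n_comp_r closure_circle_x12).
rewrite n_comp_closure2; last exact: circle_rel_sym.
congr (_ + _); apply: eq_card => t; rewrite !inE.
case: (boolP (t \in meets_cut)) => /= nt; rewrite ?andbF //.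
by rewrite /roots /root (eq_pick (connect_circle_cut nt)).
Qed.

End TwoEnds.

(* The points cut-joined to x inside and to f x outside form a set closed
   under the reglued strands. *)
Lemma connect_circle_in x y : x \in b -> y \in b ->
  {in b, forall w, connect cut_rel x w = connect cut_rel (f x) (f w)} ->
  connect (circle_rel f) x y -> connect cut_rel x y.
Proof.
move=> xb yb xf cxy; pose K v := if v \in In then connect cut_rel x v
                                         else connect cut_rel (f x) v.
have [[_ xIn _] [_ yIn _]] := (b_ends xb, b_ends yb).
suff: K y by rewrite /K yIn.
apply: (connect_preserved (K := K)) cxy; last by rewrite /K xIn.
move=> u v; rewrite /K => Ku /circle_rel_cut/orP[cuv | /andP[ue /eqP->]].
  rewrite (cut_rel_In cuv).
  by case: (u \in In) Ku => /connect_trans; apply; apply: connect1.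
have [fe ffu ->] := f_ends ue; move: Ku; case uIn: (u \in In) => /= Ku.
  by rewrite -xf // -ends_In.
have fb : f u \in b by rewrite -ends_In //; have [_ _ ->] := f_ends ue; rewrite uIn.
by rewrite xf // ffu.
Qed.

End Regluing.

Lemma n_comp_circle_eq f : agrees_off_ends f -> reglues_ends f ->
  {in ends, forall u, connect (circle_rel f) u (p u) /\ connect (circle_rel p) u (f u)} ->
  n_comp (circle_rel p) N = n_comp (circle_rel f) N.
Proof.
move=> f_cut f_ends ends_fp; apply: eq_n_comp => x y; apply/idP/idP; move: x y.
  apply: connect_sub => x y /(circle_rel_cut (fun _ _ _ => erefl))/orP[].
    by move/connect1/(connect_cut_circle f_cut).
  by case/andP=> xe /eqP->; case: (ends_fp x xe).
apply: connect_sub => x y /(circle_rel_cut f_cut)/orP[].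
  by move/connect1/(connect_cut_circle (fun _ _ _ => erefl)).
by case/andP=> xe /eqP->; case: (ends_fp x xe).
Qed.

Definition swaps (f : T -> T) x1 x2 :=
  [/\ f x1 = p x2, f x2 = p x1, f (p x1) = x2 & f (p x2) = x1].

Lemma swapsC f x1 x2 : swaps f x1 x2 -> swaps f x2 x1.
Proof. by case. Qed.

Lemma swaps_ends f x1 x2 : x1 \in b -> x2 \in b -> swaps f x1 x2 ->
  {in [:: x1; x2; p x1; p x2], forall u,
    [/\ f u \in ends, f (f u) = u & (f u \in In) = (u \notin In)]}.
Proof.
move=> x1b x2b [f1 f2 f3 f4] u.
have [[_ I1 O1] [_ I2 O2]] := (b_ends x1b, b_ends x2b).
have [x1e x2e] : x1 \in ends /\ x2 \in ends by rewrite !mem_cat x1b x2b.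
have [px1e px2e] : p x1 \in ends /\ p x2 \in ends by rewrite !mem_cat !map_f ?orbT.
by rewrite !inE => /or4P[] /eqP->; rewrite ?f1 ?f2 ?f3 ?f4 ?I1 ?I2 ?(negbTE O1) ?(negbTE O2).
Qed.

Lemma swaps_connect f x1 x2 : agrees_off_ends f -> reglues_ends f ->
  x1 \in b -> x2 \in b -> swaps f x1 x2 ->
  connect cut_rel x1 x2 || connect cut_rel (p x1) (p x2) ->
  {in [:: x1; x2; p x1; p x2], forall u,
    connect (circle_rel f) u (p u) /\ connect (circle_rel p) u (f u)}.
Proof.
move=> f_cut f_ends x1b x2b [f1 f2 f3 f4] c12.
have [[x1N _ _] [x2N _ _]] := (b_ends x1b, b_ends x2b).
have [[_ pp1 _] [_ pp2 _]] := (p_inv x1N, p_inv x2N).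
have circle12 g : agrees_off_ends g ->
    connect (circle_rel g) x1 x2 || connect (circle_rel g) (p x1) (p x2).
  by move=> g_cut; case/orP: c12 => /(connect_cut_circle g_cut) ->; rewrite ?orbT.
have sym_p := circle_rel_sym (fun _ _ _ => erefl) ends_p.
have sym_f := circle_rel_sym f_cut f_ends.
have sq_p := connect_square sym_p (connect_circle_step p x1N) (connect_circle_step p x2N)
               (circle12 _ (fun _ _ _ => erefl)).
have := connect_square sym_f (connect_circle_step f x1N) (connect_circle_step f x2N).
rewrite f1 f2 (sym_f (p x2)) => /(_ (circle12 _ f_cut)) sq_f.
move=> u; rewrite !inE => /or4P[] /eqP->; split; [apply: sq_f | apply: sq_p | apply: sq_f | apply: sq_p
  | apply: sq_f | apply: sq_p | apply: sq_f | apply: sq_p];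
  by rewrite ?f1 ?f2 ?f3 ?f4 ?pp1 ?pp2 !inE eqxx ?orbT.
Qed.

Section Reglued.
Variable q : T -> T.
Hypothesis q_cut : agrees_off_ends q.

Lemma n_comp_circle_one_crossing x1 x2 : b = [:: x1; x2] -> swaps q x1 x2 ->
  n_comp (circle_rel p) N = n_comp (circle_rel q) N.
Proof.
move=> bE sw; have [x1b x2b] : x1 \in b /\ x2 \in b by rewrite bE !inE !eqxx ?orbT.
have q_ends : reglues_ends q.
  by move=> u ue; apply: (swaps_ends x1b x2b sw); move: ue; rewrite bE.
have c12 : connect cut_rel x1 x2.
  have [x1N x1In _] := b_ends x1b; have := even_count_cut_in x1N x1In.
  by rewrite bE /= connect0; case: (connect _ x1 x2).
apply: (n_comp_circle_eq q_cut q_ends) => u ue.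
by apply: (swaps_connect q_cut q_ends x1b x2b sw); rewrite ?c12 //; move: ue; rewrite bE.
Qed.

Section Crossed.
Hypothesis q_ends : reglues_ends q.
Variables x1 x2 u1 u2 : T.
Hypothesis bE : b =i [:: x1; x2; u1; u2].
Hypotheses (swx : swaps q x1 x2) (swu : swaps q u1 u2).
Hypotheses (n12 : ~~ connect cut_rel x1 x2) (pn12 : ~~ connect cut_rel (p x1) (p x2)).
Hypotheses (c1 : connect cut_rel x1 u1) (c2 : connect cut_rel x2 u2).

Lemma crossed_mem : [/\ x1 \in b, x2 \in b, u1 \in b & u2 \in b].
Proof. by rewrite !bE !inE !eqxx ?orbT. Qed.

Lemma connect_circle_crossed_apart :
  connect cut_rel (p x1) (p u1) -> connect cut_rel (p x2) (p u2) ->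
  ~~ connect (circle_rel p) x1 x2 /\ ~~ connect (circle_rel q) x1 x2.
Proof.
move=> o1 o2; have [x1b x2b _ _] := crossed_mem.
have [qx1 qx2 _ _] := swx; have [qu1 qu2 _ _] := swu; have cS := cut_rel_sym.
have n1u2 : connect cut_rel x1 u2 = false.
  by apply: contraNF n12 => c12; apply: connect_trans c12 _; rewrite cS.
have pn1u2 : connect cut_rel (p x1) (p u2) = false.
  by apply: contraNF pn12 => c12; apply: connect_trans c12 _; rewrite cS.
have pn2u1 : connect cut_rel (p x2) (p u1) = false.
  by apply: contraNF pn12 => c21; rewrite cS; apply: connect_trans c21 _; rewrite cS.
have cond_p : {in b, forall w, connect cut_rel x1 w = connect cut_rel (p x1) (p w)}.
  move=> w; rewrite bE !inE => /or4P[] /eqP->;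
  by rewrite ?connect0 ?(negbTE n12) ?(negbTE pn12) ?c1 ?o1 ?n1u2 ?pn1u2.
have cond_q : {in b, forall w, connect cut_rel x1 w = connect cut_rel (q x1) (q w)}.
  move=> w; rewrite bE !inE => /or4P[] /eqP->; rewrite ?qx1 ?qx2 ?qu1 ?qu2 ?connect0 //.
  - by rewrite (cS (p x2)) (negbTE n12) (negbTE pn12).
  - by rewrite c1 o2.
  - by rewrite n1u2 pn2u1.
split; apply: contra n12;
  [exact: (connect_circle_in (fun _ _ _ => erefl) ends_p x1b x2b cond_p) |
   exact: (connect_circle_in q_cut q_ends x1b x2b cond_q)].
Qed.

Lemma connect_circle_crossed_joined :
  connect cut_rel (p x1) (p u2) -> connect cut_rel (p x2) (p u1) ->
  connect (circle_rel p) x1 x2 /\ connect (circle_rel q) x1 x2.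
Proof.
move=> o1 o2; have [x1b _ u1b u2b] := crossed_mem.
have [qx1 _ _ _] := swx; have [_ _ qu3 _] := swu; have cS := cut_rel_sym.
have [x1N _ _] := b_ends x1b.
have [[u1N _ _] [u2N _ _]] := (b_ends u1b, b_ends u2b).
have [[pu1N _ _] [pu2N ppu2 _]] := (p_inv u1N, p_inv u2N).
split.
  apply: connect_trans (connect_circle_step p x1N) _.
  apply: connect_trans (connect_cut_circle (fun _ _ _ => erefl) o1) _.
  apply: connect_trans (connect_circle_step p pu2N) _; rewrite ppu2.
  by apply: (connect_cut_circle (fun _ _ _ => erefl)); rewrite cS.
apply: connect_trans (connect_circle_step q x1N) _; rewrite qx1.
apply: connect_trans (connect_cut_circle q_cut o2) _.
apply: connect_trans (connect_circle_step q pu1N) _; rewrite qu3.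
by apply: (connect_cut_circle q_cut); rewrite cS.
Qed.

Lemma n_comp_circle_crossed :
  connect cut_rel (p x1) (p u1) && connect cut_rel (p x2) (p u2) ||
  connect cut_rel (p x1) (p u2) && connect cut_rel (p x2) (p u1) ->
  n_comp (circle_rel p) N = n_comp (circle_rel q) N.
Proof.
move=> out; have [x1b x2b _ _] := crossed_mem; have cS := cut_rel_sym.
have b_x12 : {in b, forall w, connect cut_rel w x1 || connect cut_rel w x2}.
  move=> w; rewrite bE !inE => /or4P[] /eqP->; rewrite ?connect0 ?orbT //.
    by rewrite (cS u1 x1) c1.
  by rewrite (cS u2 x2) c2 orbT.
rewrite (n_comp_circle_x12 (fun _ _ _ => erefl) ends_p x1b x2b b_x12).
rewrite (n_comp_circle_x12 q_cut q_ends x1b x2b b_x12).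
case/orP: out => /andP[o1 o2].
  by case: (connect_circle_crossed_apart o1 o2) => /negbTE-> /negbTE->.
by case: (connect_circle_crossed_joined o1 o2) => -> ->.
Qed.

End Crossed.

Lemma n_comp_circle_two_crossings x1 x2 z1 z2 : b = [:: x1; x2; z1; z2] ->
  swaps q x1 x2 -> swaps q z1 z2 -> n_comp (circle_rel p) N = n_comp (circle_rel q) N.
Proof.
move=> bE swx swz.
have [[x1b x2b] [z1b z2b]] : (x1 \in b /\ x2 \in b) /\ (z1 \in b /\ z2 \in b).
  by rewrite bE !inE !eqxx ?orbT.
have ends_xz u : u \in ends ->
    u \in [:: x1; x2; p x1; p x2] \/ u \in [:: z1; z2; p z1; p z2].
  rewrite bE !inE.
  by do 7 (case/orP => [/eqP-> | ]; first by rewrite eqxx ?orbT; auto);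
    move/eqP->; rewrite eqxx ?orbT; auto.
have q_ends : reglues_ends q.
  by move=> u /ends_xz[]; [apply: (swaps_ends x1b x2b swx) | apply: (swaps_ends z1b z2b swz)].
have ev_in w : w \in b -> ~~ odd (count (connect cut_rel w) [:: x1; x2; z1; z2]).
  by move=> wb; have [wN wIn _] := b_ends wb; rewrite -bE; apply: even_count_cut_in.
have ev_out w : w \in b -> ~~ odd (count (connect cut_rel (p w)) [:: p x1; p x2; p z1; p z2]).
  move=> wb; have [wN _ pwIn] := b_ends wb; have [pwN _ _] := p_inv wN.
  by have := even_count_cut_out pwN pwIn; rewrite bE.
case: (boolP (connect cut_rel x1 x2 || connect cut_rel (p x1) (p x2))) => [cx | ].
  have cz : connect cut_rel z1 z2 || connect cut_rel (p z1) (p z2).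
    case/orP: cx => [/(even_count4_pair cut_rel_sym (ev_in _ z1b)) -> //|].
    by move/(even_count4_pair cut_rel_sym (ev_out _ z1b)) ->; rewrite orbT.
  apply: (n_comp_circle_eq q_cut q_ends) => u /ends_xz[].
    exact: swaps_connect q_cut q_ends x1b x2b swx cx u.
  exact: swaps_connect q_cut q_ends z1b z2b swz cz u.
rewrite negb_or => /andP[n12 pn12].
have out := even_count4_split cut_rel_sym (ev_out _ x1b) (ev_out _ x2b) pn12.
case/orP: (even_count4_split cut_rel_sym (ev_in _ x1b) (ev_in _ x2b) n12) => /andP[c1 c2].
  by apply: (n_comp_circle_crossed q_ends _ swx swz n12 pn12 c1 c2 out) => u; rewrite bE.
apply: (n_comp_circle_crossed q_ends _ swx (swapsC swz) n12 pn12 c1 c2); last by rewrite orbC.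
by move=> u; rewrite bE !inE; case: (u == z1); case: (u == z2); rewrite ?orbT ?orbF.
Qed.

End Reglued.
End CutCircles.

Section Resolution.
Variables (D : finType) (alpha sigma : {perm D}) (n : nat) (ord : 'I_n -> D).
Local Notation md := (mdart alpha ord).
Local Notation matd := (matd alpha sigma ord).
Local Notation partner := (partner alpha sigma ord).
Hypothesis alphaK : forall d, alpha (alpha d) = d.
Hypothesis alpha_fpf : forall d, alpha d != d.
Hypothesis sigma3 : forall d, sigma (sigma (sigma d)) = d.
Hypothesis vertex_md : forall d, md d + md (sigma d) + md (sigma (sigma d)) = 1.

Lemma mdart_alpha d : md (alpha d) = md d.
Proof.
apply: eq_existsb => i; rewrite (inj_eq perm_inj) -{1}[ord i]alphaK (inj_eq perm_inj).
by rewrite orbC.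
Qed.

Lemma sbit_alpha r m : sbit alpha ord r (alpha m) = sbit alpha ord r m.
Proof.
apply: eq_existsb => i; rewrite (inj_eq perm_inj) -{1}[ord i]alphaK (inj_eq perm_inj).
by rewrite orbC.
Qed.

Lemma sigma_fpf d : sigma d != d.
Proof. by apply/eqP => sd; move: (vertex_md d); rewrite !sd; case: (md d). Qed.

Lemma sigma2_fpf d : sigma (sigma d) != d.
Proof. by apply/eqP => e; move: (sigma_fpf d); rewrite -{1}e sigma3 eqxx. Qed.

Lemma sigmaV d : (sigma^-1)%g d = sigma (sigma d).
Proof. by rewrite -{1}[d]sigma3 permK. Qed.

Lemma mdart_sigma d : md d -> ~~ md (sigma d) && ~~ md (sigma (sigma d)).
Proof. by move=> mdd; move: (vertex_md d); rewrite mdd; case: (md _); case: (md _). Qed.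

Lemma mdart_sigma2 d : ~~ md d -> ~~ md (sigma d) -> md (sigma (sigma d)).
Proof.
by move=> /negbTE nd /negbTE nsd; move: (vertex_md d); rewrite nd nsd; case: (md _).
Qed.

Lemma matd_spec x : ~~ md x ->
  md (matd x) /\ (x = sigma (matd x) \/ x = sigma (sigma (matd x))).
Proof.
move=> nx; rewrite /Defs.matd; case: ifP => msx; first by rewrite sigma3; split; auto.
by rewrite sigmaV sigma3; split; [apply: mdart_sigma2; rewrite ?msx | left].
Qed.

Lemma matd_sigma m : md m -> matd (sigma m) = m /\ matd (sigma (sigma m)) = m.
Proof.
move=> mm; have /andP[_ /negbTE n2] := mdart_sigma mm.
by rewrite /Defs.matd n2 permK sigma3 mm.
Qed.

Lemma partner_at r x : ~~ md x ->
  partner r x = sigma (alpha (matd x)) \/ partner r x = sigma (sigma (alpha (matd x))).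
Proof. by move=> _; rewrite /Defs.partner; case: ifP; auto. Qed.

Lemma partner_spec r x : ~~ md x ->
  [/\ ~~ md (partner r x), matd (partner r x) = alpha (matd x),
      partner r (partner r x) = x & partner r x != x].
Proof.
move=> nx; have [mm xm] := matd_spec nx; set m := matd x in mm xm *.
have mam : md (alpha m) by rewrite mdart_alpha.
have [e1 e2] := matd_sigma mam; have /andP[n1 n2] := mdart_sigma mam.
have mp : matd (partner r x) = alpha m by case: (partner_at r nx) => ->.
split=> //; first by case: (partner_at r nx) => ->.
  rewrite {1}/Defs.partner mp alphaK sbit_alpha /Defs.partner -/m.
  have ne a : (sigma (sigma a) == sigma a) = false by apply/negbTE; apply: sigma_fpf.
  by case: xm => ->; rewrite ?eqxx ?ne; case: (sbit _ _ r m); rewrite /= ?eqxx ?ne.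
by apply/eqP => px; move: mp; rewrite px -/m => /esym/eqP; rewrite (negbTE (alpha_fpf m)).
Qed.

Lemma n_comp_clink r : n_comp (clink alpha sigma ord r) [pred d | ~~ md d] =
  n_comp (circle_rel [pred d | ~~ md d] alpha (partner r)) [pred d | ~~ md d].
Proof.
apply: n_comp_restrict => x y; first by rewrite /circle_rel /clink /= => ->.
rewrite inE => nx /orP[/eqP-> | /eqP->]; first by rewrite inE mdart_alpha.
by rewrite inE; case: (partner_spec r nx).
Qed.

End Resolution.

Section Flip.
Variables (D : finType) (alpha sigma sigma' : {perm D}) (n : nat) (ord : 'I_n -> D).
Variable S : {set D}.
Local Notation md := (mdart alpha ord).
Local Notation matd := (matd alpha sigma ord).
Local Notation P r := (partner alpha sigma ord r).
Local Notation Q r := (partner alpha sigma' ord r).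
Local Notation X := [set d in S | alpha d \notin S].
Local Notation N := [pred d | ~~ md d].
Local Notation In := [pred d | d \in S].
Hypothesis alphaK : forall d, alpha (alpha d) = d.
Hypothesis alpha_fpf : forall d, alpha d != d.
Hypothesis sigma3 : forall d, sigma (sigma (sigma d)) = d.
Hypothesis vertex_md : forall d, md d + md (sigma d) + md (sigma (sigma d)) = 1.
Hypothesis S_sigma : forall d, (sigma d \in S) = (d \in S).
Hypothesis sigma'E : forall d, sigma' d = if d \in S then (sigma^-1)%g d else sigma d.

Lemma S_sigma2 d : (sigma (sigma d) \in S) = (d \in S).
Proof. by rewrite !S_sigma. Qed.

Lemma sigma'_S d : sigma' d = if d \in S then sigma (sigma d) else sigma d.
Proof. by rewrite sigma'E sigmaV. Qed.

Lemma sigma'2_S d : sigma' (sigma' d) = if d \in S then sigma d else sigma (sigma d).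
Proof. by rewrite (sigma'_S d); case: ifP => dS; rewrite sigma'_S ?S_sigma2 ?S_sigma dS ?sigma3. Qed.

Lemma sigma'3 d : sigma' (sigma' (sigma' d)) = d.
Proof. by rewrite (sigma'_S d); case: ifP => dS; rewrite sigma'2_S ?S_sigma2 ?S_sigma dS sigma3. Qed.

Lemma vertex_md' d : md d + md (sigma' d) + md (sigma' (sigma' d)) = 1.
Proof. by rewrite sigma'2_S sigma'_S; case: ifP => _; rewrite // addnAC. Qed.

Lemma matd_flip x : ~~ md x -> Defs.matd alpha sigma' ord x = matd x.
Proof.
move=> nx; rewrite /Defs.matd (sigmaV sigma'3) (sigmaV sigma3) sigma'2_S sigma'_S.
case: (x \in S) => //; case: (boolP (md (sigma x))) => [/(mdart_sigma vertex_md) | nsx].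
  by case/andP=> /negbTE->.
by rewrite (mdart_sigma2 vertex_md nx nsx).
Qed.

(* At a matching edge joining the inside of the disk to the outside the two
   strands are exchanged; elsewhere the resolution is unchanged. *)
Lemma partner_flip r x : ~~ md x ->
  Q r x = if (matd x \in S) == (alpha (matd x) \in S) then P r x
          else if (x == sigma (matd x)) != sbit alpha ord r (matd x)
               then sigma (alpha (matd x)) else sigma (sigma (alpha (matd x))).
Proof.
move=> nx; have [_ xm] := matd_spec sigma3 vertex_md nx.
rewrite /Defs.partner matd_flip // sigma'2_S !sigma'_S.
move: (matd x) xm => m xm; have ne a : (sigma (sigma a) == sigma a) = false.
  by apply/negbTE; apply: (sigma_fpf vertex_md).
have ne' a : (sigma a == sigma (sigma a)) = false by rewrite eq_sym ne.
by case: xm => ->; case: (m \in S); case: (alpha m \in S); case: (sbit _ _ r m);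
  rewrite /= ?eqxx ?ne ?ne'.
Qed.

Lemma partner_uncrossed r x : ~~ md x -> (matd x \in S) = (alpha (matd x) \in S) ->
  (P r x \in S) = (x \in S) /\ Q r x = P r x.
Proof.
move=> nx um; rewrite partner_flip // um eqxx; split => //.
have [_ xm] := matd_spec sigma3 vertex_md nx.
have xS : (x \in S) = (matd x \in S).
  by case: xm => e; rewrite {1}e ?S_sigma ?S_sigma2.
by case: (partner_at sigma r nx) => ->; rewrite ?S_sigma ?S_sigma2 -um xS.
Qed.

Lemma alpha_S : {in X, forall d, md d} -> forall x, ~~ md x -> (alpha x \in S) = (x \in S).
Proof.
move=> Xmd x nx; case xS: (x \in S); case aS: (alpha x \in S) => //.
  have /Xmd : x \in X by rewrite inE xS aS.
  by rewrite (negbTE nx).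
have /Xmd : alpha x \in X by rewrite inE aS alphaK xS.
by rewrite mdart_alpha // (negbTE nx).
Qed.

Lemma crossing_end r m w : md m -> m \in X -> w \in [:: sigma m; sigma (sigma m)] ->
  [/\ ~~ md w, w \in S & P r w \notin S].
Proof.
move=> mm; rewrite inE => /andP[mS amS] wm.
have /andP[n1 n2] := mdart_sigma vertex_md mm.
have [e1 e2] := matd_sigma sigma3 vertex_md mm.
have [nw ew wS] : [/\ ~~ md w, matd w = m & w \in S].
  by move: wm; rewrite !inE => /orP[] /eqP->; rewrite ?S_sigma ?S_sigma2.
by split => //; case: (partner_at sigma r nw) => ->; rewrite ew ?S_sigma ?S_sigma2.
Qed.

Lemma crossing_swaps r m : md m -> m \in X ->
  swaps (P r) (Q r) (sigma m) (sigma (sigma m)).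
Proof.
move=> mm; rewrite inE => /andP[mS amS].
have /andP[n1 n2] := mdart_sigma vertex_md mm.
have [e1 e2] := matd_sigma sigma3 vertex_md mm.
have [p1 f1 _ _] := partner_spec alphaK alpha_fpf sigma3 vertex_md r n1.
have [p2 f2 _ _] := partner_spec alphaK alpha_fpf sigma3 vertex_md r n2.
rewrite e1 in f1; rewrite e2 in f2.
have ne a : (sigma (sigma a) == sigma a) = false.
  by apply/negbTE; apply: (sigma_fpf vertex_md).
have cr : (m \in S) == (alpha m \in S) = false by rewrite mS (negbTE amS).
have cr' : (alpha m \in S) == (alpha (alpha m) \in S) = false.
  by rewrite alphaK mS (negbTE amS).
split.
- by rewrite partner_flip // e1 cr /Defs.partner e2 eqxx ne; case: (sbit _ _ r m).
- by rewrite partner_flip // e2 cr /Defs.partner e1 eqxx ne; case: (sbit _ _ r m).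
- rewrite partner_flip // f1 cr' alphaK sbit_alpha // {1}/Defs.partner e1 eqxx.
  by case: (sbit _ _ r m); rewrite /= ?eqxx ?ne.
- rewrite partner_flip // f2 cr' alphaK sbit_alpha // {1}/Defs.partner e2 ne.
  by case: (sbit _ _ r m); rewrite /= ?eqxx ?ne.
Qed.

Lemma end_uncrossed r (bl : seq D) x : ~~ md x ->
  {in X, forall c, sigma c \in bl /\ sigma (sigma c) \in bl} ->
  x \notin bl ++ map (P r) bl -> (matd x \in S) = (alpha (matd x) \in S).
Proof.
move=> nx Xbl xe; have [_ xm] := matd_spec sigma3 vertex_md nx.
case mS: (matd x \in S); case amS: (alpha (matd x) \in S) => //.
  have /Xbl[b1 b2] : matd x \in X by rewrite inE mS amS.
  by move: xe; rewrite mem_cat; case: xm => ->; rewrite ?b1 ?b2.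
have /Xbl[b1 b2] : alpha (matd x) \in X by rewrite inE amS alphaK mS.
have pb : P r x \in bl by case: (partner_at sigma r nx) => ->.
have [_ _ ppx _] := partner_spec alphaK alpha_fpf sigma3 vertex_md r nx.
have : x \in map (P r) bl by rewrite -[x]ppx map_f.
by move: xe; rewrite mem_cat => /norP[_ /negbTE->].
Qed.

(* Both the non-matching darts in the disk and those among them other than d
   come in pairs (by vertex, resp. by edge). *)
Lemma no_mixed_crossing m d : md m -> m \in X -> d \in X -> ~~ md d ->
  {in X, forall y, y = m \/ y = d} -> False.
Proof.
move=> mm mX dX nd Xmd.
have dS : d \in S by move: dX; rewrite inE => /andP[].
pose A := [set x in S | ~~ md x].
have dA : d \in A by rewrite inE dS nd.
pose nu x := if md (sigma x) then sigma (sigma x) else sigma x.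
have evenA : ~~ odd #|A|.
  apply: (@even_card_involution _ A nu) => x; rewrite inE => /andP[xS nx]; rewrite /nu.
  case: (boolP (md (sigma x))) => [/(mdart_sigma vertex_md)/andP[n1 n2] | nsx].
    rewrite sigma3 in n2; rewrite sigma3 (negbTE n2) inE S_sigma2 xS n1.
    by split=> //; apply: sigma2_fpf.
  rewrite (mdart_sigma2 vertex_md nx nsx) inE S_sigma xS nsx sigma3.
  by split=> //; apply: (sigma_fpf vertex_md).
have evenAd : ~~ odd #|A :\ d|.
  apply: (@even_card_involution _ (A :\ d) alpha) => y; rewrite !inE => /and3P[yd yS ny].
  have ayS : alpha y \in S.
    apply: contraT => ayS; have /Xmd[ym | yd'] : y \in X by rewrite inE yS ayS.
      by rewrite ym mm in ny.
    by rewrite yd' eqxx in yd.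
  rewrite ayS mdart_alpha // ny alphaK alpha_fpf !andbT; split => //.
  by apply: contraTneq dX => <-; rewrite inE alphaK yS andbF.
by move: evenA; rewrite (cardsD1 d A) dA /= (negbTE evenAd).
Qed.

Lemma alpha_N : {in X, forall d, md d} -> forall x, x \in N ->
  [/\ alpha x \in N, alpha (alpha x) = x, alpha x != x & (alpha x \in In) = (x \in In)].
Proof. by move=> Xmd x; rewrite !inE => nx; rewrite mdart_alpha // nx alphaK alpha_fpf alpha_S. Qed.

Lemma partner_N r x : x \in N -> [/\ P r x \in N, P r (P r x) = x & P r x != x].
Proof. by rewrite !inE => nx; case: (partner_spec alphaK alpha_fpf sigma3 vertex_md r nx). Qed.

Lemma partner_off_ends r (bl : seq D) x :
  {in X, forall c, sigma c \in bl /\ sigma (sigma c) \in bl} ->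
  x \in N -> x \notin bl ++ map (P r) bl -> (P r x \in In) = (x \in In) /\ Q r x = P r x.
Proof.
move=> Xbl; rewrite !inE => nx xe.
by apply: partner_uncrossed => //; apply: end_uncrossed xe.
Qed.

Lemma n_comp_flip r :
  n_comp (clink alpha sigma' ord r) N = n_comp (circle_rel N alpha (Q r)) N.
Proof. exact: (n_comp_clink alphaK alpha_fpf sigma'3 vertex_md'). Qed.

Lemma n_comp_flip_uncrossed r : {in X, forall d, ~~ md d} ->
  n_comp (clink alpha sigma' ord r) N = n_comp (clink alpha sigma ord r) N.
Proof.
move=> Xnd; apply: n_comp_restrict => x y; rewrite inE => nx.
  rewrite /clink (proj2 (partner_uncrossed r nx _)) //.
  have [mm _] := matd_spec sigma3 vertex_md nx.
  have mX : matd x \notin X by apply: contraL mm => /Xnd.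
  have amX : alpha (matd x) \notin X by apply: contraL mm => /Xnd; rewrite mdart_alpha.
  move: mX amX; rewrite !inE alphaK.
  by case: (matd x \in S); case: (alpha (matd x) \in S).
rewrite /clink => /orP[/eqP-> | /eqP->]; rewrite inE.
  by rewrite mdart_alpha.
by case: (partner_spec alphaK alpha_fpf sigma'3 vertex_md' r nx).
Qed.

Lemma n_comp_flip_one_crossing r m : md m -> m \in X -> {in X, forall y, y = m} ->
  n_comp (clink alpha sigma' ord r) N = n_comp (clink alpha sigma ord r) N.
Proof.
move=> mm mX Xm; have Xmd : {in X, forall d, md d} by move=> y /Xm->.
pose b := [:: sigma m; sigma (sigma m)].
have Xb : {in X, forall c, sigma c \in b /\ sigma (sigma c) \in b}.
  by move=> c /Xm->; rewrite !inE !eqxx ?orbT.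
rewrite n_comp_flip (n_comp_clink alphaK alpha_fpf sigma3 vertex_md); symmetry.
apply: (n_comp_circle_one_crossing (In := In) (b := b) (alpha_N Xmd) (partner_N r)).
- by move=> w /(crossing_end r mm mX)[nw wS pw]; rewrite !inE nw wS.
- by rewrite /= inE andbT eq_sym (sigma_fpf vertex_md).
- by move=> x xN xe; case: (partner_off_ends Xb xN xe).
- by move=> x xN xe; case: (partner_off_ends Xb xN xe).
- by [].
- exact: crossing_swaps.
Qed.

Lemma n_comp_flip_two_crossings r m d : md m -> md d -> m \in X -> d \in X -> m != d ->
  {in X, forall y, y = m \/ y = d} ->
  n_comp (clink alpha sigma' ord r) N = n_comp (clink alpha sigma ord r) N.
Proof.
move=> mm dd mX dX nmd Xmd2; have Xmd : {in X, forall y, md y} by move=> y /Xmd2[]->.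
pose b := [:: sigma m; sigma (sigma m); sigma d; sigma (sigma d)].
have Xb : {in X, forall c, sigma c \in b /\ sigma (sigma c) \in b}.
  by move=> c /Xmd2[]->; rewrite !inE !eqxx ?orbT.
have [e1 e2] := matd_sigma sigma3 vertex_md mm.
have [e3 e4] := matd_sigma sigma3 vertex_md dd.
have neq u v : matd u != matd v -> u != v by apply: contra => /eqP->.
rewrite n_comp_flip (n_comp_clink alphaK alpha_fpf sigma3 vertex_md); symmetry.
apply: (n_comp_circle_two_crossings (In := In) (b := b) (alpha_N Xmd) (partner_N r)).
- have ends c w : md c -> c \in X -> w \in [:: sigma c; sigma (sigma c)] ->
      [/\ w \in N, w \in In & P r w \notin In].
    by move=> mc cX /(crossing_end r mc cX)[nw wS pw]; rewrite !inE nw wS.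
  move=> w; rewrite !inE => /or4P[] /eqP->;
    [apply: ends mm mX _ | apply: ends mm mX _ | apply: ends dd dX _ | apply: ends dd dX _];
    by rewrite !inE eqxx ?orbT.
- have s12 u : sigma u != sigma (sigma u) by rewrite eq_sym (sigma_fpf vertex_md).
  rewrite /b !cons_uniq !inE !negb_or !s12 andbT.
  by rewrite !(neq (sigma _)) ?e1 ?e2 ?e3 ?e4.
- by move=> x xN xe; case: (partner_off_ends Xb xN xe).
- by move=> x xN xe; case: (partner_off_ends Xb xN xe).
- by [].
- exact: crossing_swaps.
- exact: crossing_swaps.
Qed.

Hypothesis X2 : #|X| <= 2.

Lemma circles_flip c : circles alpha sigma' ord c = circles alpha sigma ord c.
Proof.
rewrite /circles; case: (boolP [exists m in X, md m]) => [/existsP[m /andP[mX mm]] | noX].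
  case: (set_0Vmem (X :\ m)) => [X0 | [d /setD1P[dm dX]]].
    apply: (n_comp_flip_one_crossing c.1 mm mX) => y yX; apply/eqP; apply: contraT => ym.
    have : y \in X :\ m by rewrite in_setD1 ym yX.
    by rewrite X0 inE.
  have md_ne : m != d by rewrite eq_sym.
  have Xmd : {in X, forall y, y = m \/ y = d}.
    by move=> y; rewrite (card_le2_set2 X2 mX dX md_ne) => /set2P.
  case: (boolP (md d)) => [dd | nd].
    exact: (n_comp_flip_two_crossings c.1 mm dd mX dX md_ne Xmd).
  by case: (no_mixed_crossing mm mX dX nd Xmd).
apply: (n_comp_flip_uncrossed c.1) => y yX; apply: contra noX => my.
by apply/existsP; exists y; rewrite yX.
Qed.

End Flip.

Lemma porbit_order3 (T : finType) (s : {perm T}) x :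
  (forall y, s (s (s y)) = y) -> porbit s x =i [:: x; s x; s (s x)].
Proof.
move=> s3 y; apply/porbitP/idP => [[i ->] | ].
  rewrite permX; elim: i => [|i]; rewrite !inE ?eqxx //=.
  by case/or3P => /eqP->; rewrite ?s3 eqxx ?orbT.
rewrite !inE => /or3P[] /eqP->; [exists 0 | exists 1 | exists 2];
  by rewrite ?expg0 ?expg1 ?expgS ?expg1 ?permM ?perm1.
Qed.

Lemma card_vertex_mdart (D : finType) (alpha sigma : {perm D}) n (ord : 'I_n -> D) d :
  (forall y, [/\ sigma y != y, sigma (sigma y) != y & sigma (sigma (sigma y)) = y]) ->
  #|[set d' in porbit sigma d | mdart alpha ord d']| =
  mdart alpha ord d + mdart alpha ord (sigma d) + mdart alpha ord (sigma (sigma d)).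
Proof.
move=> rot; have s3 y : sigma (sigma (sigma y)) = y by case: (rot y).
have [s1 s2 _] := rot d; have [s1' _ _] := rot (sigma d).
have uv : uniq [:: d; sigma d; sigma (sigma d)].
  by rewrite /= !inE !negb_or (eq_sym d) s1 (eq_sym d) s2 (eq_sym (sigma d)) s1'.
have -> : mdart alpha ord d + mdart alpha ord (sigma d) + mdart alpha ord (sigma (sigma d))
    = count (mdart alpha ord) [:: d; sigma d; sigma (sigma d)] by rewrite /= addn0 addnA.
rewrite -size_filter -(card_uniqP (filter_uniq _ uv)); apply: eq_card => y.
by rewrite !inE mem_filter porbit_order3 // andbC.
Qed.

Lemma has_bad_face_eq (D : finType) (alpha sigma sigma' : {perm D}) n (ord : 'I_n -> D) :
  (forall c, circles alpha sigma' ord c = circles alpha sigma ord c) ->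
  has_bad_face alpha sigma ord <-> has_bad_face alpha sigma' ord.
Proof.
move=> circ; have eta c i : eta_arc alpha sigma' ord c i = eta_arc alpha sigma ord c i.
  by rewrite /eta_arc !circ.
have delta c i : delta_arc alpha sigma' ord c i = delta_arc alpha sigma ord c i.
  by rewrite /delta_arc !circ.
have marc c i : m_arc alpha sigma' ord c i = m_arc alpha sigma ord c i.
  by rewrite /m_arc !circ.
by split=> -[v [u [i [j [vu [ei ej dj mi]]]]]]; exists v, u, i, j;
  move: ei ej dj mi; rewrite ?eta ?delta ?marc.
Qed.

Theorem mainTheorem8 (D : finType) (alpha sigma sigma' : {perm D}) (n : nat)
    (ord : 'I_n -> D) (S : {set D}) :
  is_pmg alpha sigma ord ->
  is_flip alpha sigma sigma' S ->
  (has_bad_face alpha sigma ord <-> has_bad_face alpha sigma' ord).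
Proof.
move=> [alpha_inv rot _ _ one_md] [S_sigma X2 sigma'E].
have alphaK d : alpha (alpha d) = d by case: (alpha_inv d).
have alpha_fpf d : alpha d != d by case: (alpha_inv d).
have sigma3 d : sigma (sigma (sigma d)) = d by case: (rot d).
have vertex_md d : mdart alpha ord d + mdart alpha ord (sigma d) +
                   mdart alpha ord (sigma (sigma d)) = 1.
  by rewrite -card_vertex_mdart.
apply: has_bad_face_eq => c.
exact: circles_flip alphaK alpha_fpf sigma3 vertex_md S_sigma sigma'E X2 c.
Qed.
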